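(* Let $\Pi$ be a cGAP whose VC rule has size $m$. For each function $\sigma$ assigning to every ground VC-rule instance $B_1(v),\dots,B_m(v)\hookleftarrow A_1(v),\dots,A_m(v)$ of $\Pi$ an index $\sigma(v)\in\{1,\dots,m\}$, let $\Pi'_\sigma$ be the ground GAP consisting of all ground non-VC rules of $\Pi$ together with the rules $B_{\sigma(v)}(v):\mu\leftarrow A_{\sigma(v)}(v):\mu$, one for each ground VC-rule instance. Then an interpretation $I$ is a coherent model of $\Pi$ if and only if there exists such a $\sigma$ with $I=\mathcal{MM}(\Pi'_\sigma)$ and $I$ satisfies every ground VC-rule instance of $\Pi$.
   Context: Fix disjoint sets of unary vertex predicate symbols and binary edge predicate symbols; constants are the vertices of a finite social network. An annotation is an element of $[0,1]$, an annotation variable (ranging over $[0,1]$), or $f(t_1,\dots,t_k)$ for an annotation function symbol $f$ denoting a fixed function $[0,1]^k\to[0,1]$ and annotations $t_i$. An annotated atom is $A:\mu$ with $A$ an atom and $\mu$ an annotation; an annotated (GAP) rule has the form $A_0:f(\mu_1,\dots,\mu_n)\leftarrow A_1:\mu_1,\dots,A_n:\mu_n$ ($n=0$: a fact); a GAP is a finite set of such rules. A vertex choice (VC) rule of size $m$ is $b_1(X),\dots,b_m(X)\hookleftarrow a_1(X),\dots,a_m(X)$ with $a_i,b_i$ vertex predicate symbols; its ground instance for vertex $v$ is $b_1(v),\dots,b_m(v)\hookleftarrow a_1(v),\dots,a_m(v)$. A choice GAP (cGAP) $\Pi$ is a finite set of annotated rules plus exactly one VC rule. An interpretation is a map $I$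 from ground atoms to $[0,1]$, ordered pointwise ($I_1\preceq I_2$ iff $I_1(A)\le I_2(A)$ for all $A$). $I\models A:\mu$ iff $I(A)\ge\mu$; $I$ satisfies a ground annotated rule iff $I(A_0)$ is at least the head annotation or some body annotated atom is not satisfied; $I$ satisfies a ground VC rule $B_1,\dots,B_m\hookleftarrow A_1,\dots,A_m$ iff there is $i$ with $I(B_i)=I(A_i)$ and $I(B_j)=0$ for all $j\neq i$; a non-ground rule is satisfied iff all its ground instances are; a model of $\Pi$ satisfies all its rules. Every GAP $P$ has a unique $\preceq$-minimal model, denoted $\mathcal{MM}(P)$ (the least fixpoint of its immediate-consequence operator). Coherence transform: for an interpretation $I$, ${\rm coh}(\Pi,I)$ is the GAP consisting of all ground non-VC rules of $\Pi$ together with, for each ground VC-rule instance $B_1(v),\dots,B_m(v)\hookleftarrow A_1(v),\dots,A_m(v)$ and each $i$ with $I(A_i(v))>0$ and $I(A_i(v))=I(B_i(v))$, the rule $B_i(v):\mu\leftarrow A_i(v):\mu$. A model $M$ of $\Pi$ is coherent iff $M=\mathcal{MM}({\rm coh}(\Pi,M))$. *)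

From Stdlib Require Import Reals List.
Import ListNotations.
Open Scope R_scope.

Set Implicit Arguments.

Section Syntax.
(* V  : vertices of the social network (the constants);
   VP : unary vertex predicate symbols; EP : binary edge predicate symbols
   (disjoint since they are different types). *)
Variables (V VP EP : Type).

Inductive term : Type := TVar (x : nat) | TConst (v : V).

Inductive atom : Type :=
  | AtV (p : VP) (t : term)
  | AtE (e : EP) (t1 t2 : term).

Inductive gatom : Type :=
  | GV (p : VP) (v : V)
  | GE (e : EP) (u w : V).

(* Annotations: a constant, an annotation variable (indexed by nat), or an
   annotation function symbol (denoting a function on lists of reals, used at
   arity = length of its argument list) applied to annotations. *)
Inductive annot : Type :=
  | AConst (c : R)
  | AVar (x : nat)
  | AApp (f : list R -> R) (args : list annot).

(* An annotated rule  A0 : f(mu_1,...,mu_n) <- A1 : mu_1, ..., An : mu_n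
   (n = 0 : a fact), over atoms of type At. *)
Record arule (At : Type) : Type := mkRule {
  r_head : At;
  r_fun  : list R -> R;
  r_body : list (At * annot)
}.

(* A choice GAP: finitely many annotated rules plus exactly one VC rule
   b_0(X),...,b_{m-1}(X) <-< a_0(X),...,a_{m-1}(X) of size m
   (indices are 0-based: i < m). *)
Record cgap : Type := mkCGAP {
  c_rules : list (arule atom);
  vc_m : nat;
  vc_a : nat -> VP;
  vc_b : nat -> VP
}.

End Syntax.

Arguments TVar {V} x.
Arguments TConst {V} v.
Arguments AtV {V VP EP} p t.
Arguments AtE {V VP EP} e t1 t2.
Arguments GV {V VP EP} p v.
Arguments GE {V VP EP} e u w.
Arguments mkRule {At} r_head r_fun r_body.

Section Semantics.
Variables (V VP EP : Type).

Definition in01 (x : R) : Prop := 0 <= x <= 1.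

Fixpoint eval_annot (rho : nat -> R) (t : annot) : R :=
  match t with
  | AConst c => c
  | AVar x => rho x
  | AApp f args => f (map (eval_annot rho) args)
  end.

Definition fun01 (k : nat) (f : list R -> R) : Prop :=
  forall l : list R, length l = k -> Forall in01 l -> in01 (f l).

Fixpoint wf_annot (t : annot) : Prop :=
  match t with
  | AConst c => in01 c
  | AVar _ => True
  | AApp f args =>
      fun01 (length args) f /\
      (fix go (l : list annot) : Prop :=
         match l with nil => True | a :: l' => wf_annot a /\ go l' end) args
  end.

Definition wf_rule (At : Type) (r : arule At) : Prop :=
  fun01 (length (r_body r)) (r_fun r) /\
  Forall (fun p => wf_annot (snd p)) (r_body r).

Definition wf_cgap (P : cgap V VP EP) : Prop := Forall (@wf_rule _) (c_rules P).

Definition gterm (theta : nat -> V) (t : term V) : V :=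
  match t with TVar x => theta x | TConst v => v end.

Definition gatm (theta : nat -> V) (a : atom V VP EP) : gatom V VP EP :=
  match a with
  | AtV p t => GV p (gterm theta t)
  | AtE e t1 t2 => GE e (gterm theta t1) (gterm theta t2)
  end.

Definition ground_rule (theta : nat -> V) (r : arule (atom V VP EP))
  : arule (gatom V VP EP) :=
  mkRule (gatm theta (r_head r)) (r_fun r)
         (map (fun p => (gatm theta (fst p), snd p)) (r_body r)).

Definition interp := gatom V VP EP -> R.
Definition is_interp (I : interp) : Prop := forall A, in01 (I A).
Definition ileq (I J : interp) : Prop := forall A, I A <= J A.

Definition valuation (rho : nat -> R) : Prop := forall x, in01 (rho x).

Definition sat_grule (I : interp) (r : arule (gatom V VP EP)) : Prop :=
  forall rho, valuation rho ->
    Forall (fun p => eval_annot rho (snd p) <= I (fst p)) (r_body r) ->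
    r_fun r (map (fun p => eval_annot rho (snd p)) (r_body r)) <= I (r_head r).

Definition gprog := arule (gatom V VP EP) -> Prop.

Definition gmodel (P : gprog) (I : interp) : Prop :=
  is_interp I /\ forall r, P r -> sat_grule I r.

Definition is_MM (P : gprog) (M : interp) : Prop :=
  gmodel P M /\ forall N, gmodel P N -> ileq M N.

(* The rule  B : mu <- A : mu  (mu an annotation variable). *)
Definition copy_rule (B A : gatom V VP EP) : arule (gatom V VP EP) :=
  mkRule B (fun l => hd 0 l) [(A, AVar 0)].

Definition ground_rules (P : cgap V VP EP) : gprog :=
  fun r => exists r0 theta, In r0 (c_rules P) /\ r = ground_rule theta r0.

Definition vcA (P : cgap V VP EP) (i : nat) (v : V) : gatom V VP EP :=
  GV (vc_a P i) v.
Definition vcB (P : cgap V VP EP) (i : nat) (v : V) : gatom V VP EP :=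
  GV (vc_b P i) v.

Definition sat_vc (P : cgap V VP EP) (I : interp) (v : V) : Prop :=
  exists i, (i < vc_m P)%nat /\ I (vcB P i v) = I (vcA P i v) /\
    forall j, (j < vc_m P)%nat -> j <> i -> I (vcB P j v) = 0.

Definition cmodel (P : cgap V VP EP) (I : interp) : Prop :=
  is_interp I /\
  (forall r, ground_rules P r -> sat_grule I r) /\
  (forall v, sat_vc P I v).

Definition coh (P : cgap V VP EP) (I : interp) : gprog :=
  fun r => ground_rules P r \/
    exists v i, (i < vc_m P)%nat /\ 0 < I (vcA P i v) /\
      I (vcA P i v) = I (vcB P i v) /\ r = copy_rule (vcB P i v) (vcA P i v).

Definition coherent (P : cgap V VP EP) (M : interp) : Prop :=
  cmodel P M /\ is_MM (coh P M) M.

Definition Pi_sigma (P : cgap V VP EP) (sigma : V -> nat) : gprog :=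
  fun r => ground_rules P r \/
    exists v, r = copy_rule (vcB P (sigma v) v) (vcA P (sigma v) v).

End Semantics.

(* A coherent model and Pi'_sigma differ only in the copy rules of the VC
   instances.  Choosing sigma(v) as the index that the VC rule selects in I,
   every copy rule of coh(P, I) is a copy rule of Pi'_sigma, and the extra
   copy rules of Pi'_sigma have body value 0 in I, so they hold in every
   nonnegative interpretation below I.  Since models of a GAP are closed under
   pointwise minimum, I is least for one program iff it is least for the
   other. *)

From Stdlib Require Import Reals List Lra IndefiniteDescription.
Open Scope R_scope.

Set Implicit Arguments.

Section LeastModels.
Variables V VP EP : Type.
Implicit Types (I J N : interp V VP EP) (P Q : gprog V VP EP).

Definition imin I J : interp V VP EP := fun a => Rmin (I a) (J a).

Lemma ileq_imin_l I J : ileq (imin I J) I.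
Proof. intro a; apply Rmin_l. Qed.

Lemma ileq_imin_r I J : ileq (imin I J) J.
Proof. intro a; apply Rmin_r. Qed.

Lemma is_interp_imin I J : is_interp I -> is_interp J -> is_interp (imin I J).
Proof.
  intros HI HJ a; destruct (HI a), (HJ a); unfold imin, in01, Rmin.
  destruct (Rle_dec (I a) (J a)); lra.
Qed.

Lemma sat_grule_imin I J r :
  sat_grule I r -> sat_grule J r -> sat_grule (imin I J) r.
Proof.
  intros HIr HJr rho Hrho Hbody.
  assert (HbodyI : Forall (fun p => eval_annot rho (snd p) <= I (fst p)) (r_body r)).
  { eapply Forall_impl; [|exact Hbody]; intros p Hp.
    pose proof (ileq_imin_l I J (fst p)); lra. }
  assert (HbodyJ : Forall (fun p => eval_annot rho (snd p) <= J (fst p)) (r_body r)).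
  { eapply Forall_impl; [|exact Hbody]; intros p Hp.
    pose proof (ileq_imin_r I J (fst p)); lra. }
  apply Rmin_glb; auto.
Qed.

Lemma gmodel_imin P I J : gmodel P I -> gmodel P J -> gmodel P (imin I J).
Proof.
  intros [HI HIr] [HJ HJr]; split; [now apply is_interp_imin|].
  intros r Hr; apply sat_grule_imin; auto.
Qed.

(* For a model N of Q, the model imin N I of Q lies below I. *)
Lemma is_MM_transfer P Q I :
  is_MM P I -> gmodel Q I ->
  (forall J, ileq J I -> gmodel Q J -> gmodel P J) ->
  is_MM Q I.
Proof.
  intros [_ Hleast] HQI HQP; split; [exact HQI|].
  intros N HQN a.
  assert (Hmin : ileq I (imin N I)).
  { apply Hleast, HQP; [apply ileq_imin_r|now apply gmodel_imin]. }
  pose proof (Hmin a); pose proof (ileq_imin_l N I a); lra.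
Qed.

End LeastModels.

Section CopyRules.
Variables V VP EP : Type.
Implicit Types (I : interp V VP EP) (A B : gatom V VP EP).

Lemma sat_copy_rule I B A :
  in01 (I A) -> sat_grule I (copy_rule B A) <-> I A <= I B.
Proof.
  intros HA; split.
  - intros Hsat; apply (Hsat (fun _ => I A)); [intros _; exact HA|].
    repeat constructor; simpl; lra.
  - intros HAB rho _ Hbody; inversion Hbody; subst; simpl in *; lra.
Qed.

Lemma sat_copy_rule_eq I B A : I A = I B -> sat_grule I (copy_rule B A).
Proof. intros E rho _ Hbody; inversion Hbody; subst; simpl in *; lra. Qed.

Lemma sat_copy_rule_null I B A :
  I A <= 0 -> 0 <= I B -> sat_grule I (copy_rule B A).
Proof. intros HA HB rho _ Hbody; inversion Hbody; subst; simpl in *; lra. Qed.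

End CopyRules.

Section Choices.
Variables V VP EP : Type.
Variable P : cgap V VP EP.
Implicit Types (I J : interp V VP EP) (sigma : V -> nat).

Definition vc_choice I sigma : Prop :=
  forall v, (sigma v < vc_m P)%nat /\
    I (vcB P (sigma v) v) = I (vcA P (sigma v) v) /\
    forall j, (j < vc_m P)%nat -> j <> sigma v -> I (vcB P j v) = 0.

Lemma sat_vc_choice I :
  (forall v, sat_vc P I v) -> exists sigma, vc_choice I sigma.
Proof. exact (functional_choice _). Qed.

Lemma gmodel_Pi_sigma I sigma :
  is_interp I -> (forall r, ground_rules P r -> sat_grule I r) ->
  (forall v, I (vcB P (sigma v) v) = I (vcA P (sigma v) v)) ->
  gmodel (Pi_sigma P sigma) I.
Proof.
  intros HI Hg Heq; split; [exact HI|].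
  intros r [Hr|[v ->]]; [now apply Hg|apply sat_copy_rule_eq; auto].
Qed.

Lemma gmodel_coh I J :
  is_interp J -> (forall r, ground_rules P r -> sat_grule J r) ->
  (forall v i, (i < vc_m P)%nat -> 0 < I (vcA P i v) ->
     I (vcA P i v) = I (vcB P i v) ->
     sat_grule J (copy_rule (vcB P i v) (vcA P i v))) ->
  gmodel (coh P I) J.
Proof.
  intros HJ Hg Hcopy; split; [exact HJ|].
  intros r [Hr|[v [i [Hi [Hpos [E ->]]]]]]; auto.
Qed.

(* The only copy rules of coh(P, I) are those of the chosen indices: any
   other index has B-value 0 in I, hence cannot have a positive A-value equal
   to it. *)
Lemma gmodel_coh_of_Pi_sigma I J sigma :
  vc_choice I sigma -> gmodel (Pi_sigma P sigma) J -> gmodel (coh P I) J.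
Proof.
  intros Hsigma [HJ HJr]; apply gmodel_coh; [exact HJ|now intros r Hr; apply HJr; left|].
  intros v i Hi Hpos E.
  destruct (PeanoNat.Nat.eq_dec i (sigma v)) as [->|Hne].
  - apply HJr; right; now exists v.
  - destruct (Hsigma v) as [_ [_ Hzero]]; rewrite (Hzero i Hi Hne) in E; lra.
Qed.

(* A copy rule of Pi'_sigma missing from coh(P, I) has A-value 0 in I, so it
   holds in every nonnegative J below I. *)
Lemma gmodel_Pi_sigma_of_coh I J sigma :
  (forall v, (sigma v < vc_m P)%nat) ->
  (forall v, I (vcB P (sigma v) v) = I (vcA P (sigma v) v)) ->
  ileq J I -> gmodel (coh P I) J -> gmodel (Pi_sigma P sigma) J.
Proof.
  intros Hbound Heq HJI [HJ HJr]; split; [exact HJ|].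
  intros r [Hr|[v ->]]; [now apply HJr; left|].
  destruct (Rlt_dec 0 (I (vcA P (sigma v) v))) as [Hpos|Hnpos].
  - apply HJr; right; exists v, (sigma v); repeat split; auto.
  - apply sat_copy_rule_null; [|apply HJ].
    pose proof (HJI (vcA P (sigma v) v)); lra.
Qed.

(* If the copy rule of sigma(v) holds, the VC instance at v can only be
   satisfied with B_sigma(v)(v) and A_sigma(v)(v) equal: either sigma(v) is
   the selected index, or B_sigma(v)(v) is 0 and forces A_sigma(v)(v) to 0. *)
Lemma sat_vc_copy_eq I sigma v :
  is_interp I -> (sigma v < vc_m P)%nat -> sat_vc P I v ->
  I (vcA P (sigma v) v) <= I (vcB P (sigma v) v) ->
  I (vcB P (sigma v) v) = I (vcA P (sigma v) v).
Proof.
  intros HI Hbound [i [Hi [E Hzero]]] Hle.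
  destruct (PeanoNat.Nat.eq_dec (sigma v) i) as [->|Hne]; [exact E|].
  rewrite (Hzero _ Hbound Hne) in *; destruct (HI (vcA P (sigma v) v)); lra.
Qed.

End Choices.

Theorem mainTheorem1 (V VP EP : Type)
  (V_finite : exists l : list V, forall v : V, In v l)
  (P : cgap V VP EP) (wfP : wf_cgap P)
  (I : interp V VP EP) (HI : is_interp I) :
  coherent P I <->
  exists sigma : V -> nat,
    (forall v, (sigma v < vc_m P)%nat) /\
    is_MM (Pi_sigma P sigma) I /\
    (forall v, sat_vc P I v).
Proof.
  split.
  - intros [[_ [Hg Hvc]] HMM].
    destruct (sat_vc_choice Hvc) as [sigma Hsigma].
    exists sigma; split; [intro v; apply Hsigma|split; [|exact Hvc]].
    apply (is_MM_transfer HMM).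
    + apply gmodel_Pi_sigma; auto; intro v; apply Hsigma.
    + intros J _; exact (gmodel_coh_of_Pi_sigma Hsigma).
  - intros [sigma [Hbound [HMM Hvc]]].
    pose proof (proj2 (proj1 HMM)) as Hrules.
    assert (Heq : forall v, I (vcB P (sigma v) v) = I (vcA P (sigma v) v)).
    { intro v; apply sat_vc_copy_eq; auto.
      apply sat_copy_rule; [apply HI|]; apply Hrules; right; now exists v. }
    assert (Hg : forall r, ground_rules P r -> sat_grule I r).
    { intros r Hr; apply Hrules; now left. }
    split; [split; [exact HI|split; assumption]|].
    apply (is_MM_transfer HMM).
    + apply gmodel_coh; auto; intros v i _ _ E; now apply sat_copy_rule_eq.
    + intros J; apply gmodel_Pi_sigma_of_coh; assumption.
Qed.
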